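(* Let $\rho_1\in(0,1)$, $\rho_2\in(0,1-\rho_1)$ and $\eta\sim\mu^{\rho_1,\rho_2}$ constructed from $(a(i))$, $(s(i))$ as in the context. Then for any $x\in\mathbb{Z}$, \[ h^{\rho_1}(x,0)=\hat h^{\rho_1}(x,0)+\sup_{j\ge0}\{h^{\rho_1+\rho_2}(j,0)-\hat h^{\rho_1}(j,0)\}-\sup_{j\ge x}\{h^{\rho_1+\rho_2}(j,0)-h^{\rho_1+\rho_2}(x,0)-(\hat h^{\rho_1}(j,0)-\hat h^{\rho_1}(x,0))\}. \]
   Context: Queueing construction: $(a(i))_{i\in\mathbb{Z}}$, $(s(i))_{i\in\mathbb{Z}}$ independent families of i.i.d. Bernoulli variables with parameters $\rho_1$, $\rho_1+\rho_2$; $\mathcal{A}_{[i,j]}=\sum_{k=i}^ja(k)$, $\mathcal{S}_{[i,j]}=\sum_{k=i}^js(k)$ (empty sums $0$); $Q_i=\sup_{j\ge i-1}(\mathcal{A}_{[i,j]}-\mathcal{S}_{[i,j]})$; $d(i)=1$ iff $s(i)=1$ and ($a(i)=1$ or $Q_{i+1}\ge1$). The configuration $\eta$ has $\eta(i)=1$ if $d(i)=1$, $\eta(i)=2$ if $s(i)=1,d(i)=0$, $\eta(i)=+\infty$ otherwise; its law is $\mu^{\rho_1,\rho_2}$. For a $\{0,1\}$-valued configuration $\zeta$ define its height profile $g(0)=0$, $g(x)=\sum_{i=1}^x(1-2\zeta(i))$ for $x\ge1$, $g(x)=-\sum_{i=x+1}^0(1-2\zeta(i))$ for $x\le-1$.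 Then $h^{\rho_1}(\cdot,0)$, $h^{\rho_1+\rho_2}(\cdot,0)$, $\hat h^{\rho_1}(\cdot,0)$ are the height profiles of $\zeta=d$, $\zeta=s$, $\zeta=a$ respectively. *)

From HB Require Import structures.
From mathcomp Require Import all_boot all_order all_algebra.
From mathcomp Require Import all_classical all_reals all_analysis.
Set Implicit Arguments. Unset Strict Implicit. Unset Printing Implicit Defensive.
Import Order.TTheory GRing.Theory Num.Theory.
Local Open Scope classical_set_scope.
Local Open Scope ring_scope.

Definition isum (f : int -> int) (i j : int) : int :=
  if i <= j then \sum_(k < absz (j - i + 1)) f (i + k%:Z) else 0.

Definition AS (a s : int -> bool) (i j : int) : int :=
  isum (fun k => (a k)%:Z) i j - isum (fun k => (s k)%:Z) i j.

Definition Qlen (R : realType) (a s : int -> bool) (i : int) : \bar R :=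
  ereal_sup [set (((AS a s i j)%:~R : R)%:E) | j in [set j : int | i - 1 <= j]].

Definition dep (R : realType) (a s : int -> bool) (i : int) : bool :=
  s i && (a i || `[< (1 <= Qlen R a s (i + 1))%E >]).

Definition height (zeta : int -> bool) (x : int) : int :=
  if 0 <= x then isum (fun k => 1 - 2 * (zeta k)%:Z) 1 x
  else - isum (fun k => 1 - 2 * (zeta k)%:Z) (x + 1) 0.

Definition indep_bool_family (d : measure_display) (T : measurableType d)
  (R : realType) (P : probability T R) (I : eqType) (X : I -> T -> bool) : Prop :=
  forall (J : seq I) (b : I -> bool), uniq J ->
    P (\bigcap_(i in [set` J]) [set w | X i w = b i]) =
    (\prod_(i <- J) P [set w | X i w = b i])%E.

From HB Require Import structures.
From mathcomp Require Import all_boot all_order all_algebra.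
From mathcomp Require Import all_classical all_reals all_analysis.
From mathcomp Require Import zify ring lra.
Import Order.TTheory GRing.Theory Num.Theory.
Local Open Scope classical_set_scope.
Local Open Scope ring_scope.

(* With Q_i = max_{j >= i-1} (A - S)_[i,j],
   the Lindley recursion Q_i = max(0, a(i) - s(i) + Q_{i+1}) gives Q_i - Q_{i+1} = a(i) - d(i),
   so that h^{rho1}(x) - hhat^{rho1}(x) = 2 (Q_1 - Q_{x+1}).  Since
   h^{rho1+rho2}(j) - h^{rho1+rho2}(x) - (hhat^{rho1}(j) - hhat^{rho1}(x)) = 2 (A - S)_[x+1,j],
   the two suprema of the statement are 2 Q_1 and 2 Q_{x+1}.  All this only needs every Q_i
   to be finite, which holds as soon as the walk (A - S)_[1,j] is eventually negative.
   Because services are more frequent than arrivals, a Chernoff bound gives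
   P((A - S)_[1,j] >= 0) <= c^j for some c < 1, and Borel-Cantelli shows that the walk is
   almost surely eventually negative. *)

Section interval_sums.
Variable f : int -> int.

Lemma isum_nat (i : int) (n : nat) :
  isum f i (i + n%:Z - 1) = \sum_(k < n) f (i + k%:Z).
Proof.
rewrite /isum; case: n => [|n]; first by rewrite big_ord0 ifF //; lia.
rewrite ifT; last by lia.
by have -> : absz (i + n.+1%:Z - 1 - i + 1) = n.+1 by lia.
Qed.

Lemma isum_empty (i : int) : isum f i (i - 1) = 0.
Proof. by have := isum_nat i 0; rewrite addr0 big_ord0. Qed.

Lemma isum_recr (i j : int) : i - 1 <= j ->
  isum f i (j + 1) = isum f i j + f (j + 1).
Proof.
move=> ij; have -> : j = i + (absz (j - i + 1))%:Z - 1 by lia.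
have -> : i + (absz (j - i + 1))%:Z - 1 + 1 = i + (absz (j - i + 1)).+1%:Z - 1.
  by lia.
by rewrite !isum_nat big_ord_recr /=; congr (_ + f _); lia.
Qed.

Lemma isum_split (i j k : int) : i - 1 <= j -> j <= k ->
  isum f i k = isum f i j + isum f (j + 1) k.
Proof.
move=> ij jk; have -> : k = j + (absz (k - j))%:Z by lia.
elim: (absz _) => [|n IH].
  by have := isum_empty (j + 1); rewrite addrK addr0 => ->; rewrite addr0.
by rewrite (_ : j + n.+1%:Z = j + n%:Z + 1) ?isum_recr ?IH ?addrA //; lia.
Qed.

Lemma isum_recl (i j : int) : i <= j -> isum f i j = f i + isum f (i + 1) j.
Proof.
move=> ij; have ii : i - 1 <= i by lia.
by rewrite (isum_split _ _ _ ii ij); have := isum_nat i 1; rewrite addrK big_ord1 addr0 => ->.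
Qed.

End interval_sums.

Lemma height0 (z : int -> bool) : height z 0 = 0.
Proof. by rewrite /height /= -(subrr 1) isum_empty. Qed.

Lemma height_step (z : int -> bool) (x : int) :
  height z (x + 1) - height z x = 1 - 2 * (z (x + 1))%:Z.
Proof.
rewrite /height; case: (leP 0 x) => x0.
  by rewrite ifT ?isum_recr //; lia.
case: (leP 0 (x + 1)) => x1.
  have -> : x = -1 by lia.
  by rewrite /= -(subrr 1) isum_empty isum_recl // -(subrr 1) isum_empty; lia.
by rewrite (@isum_recl _ (x + 1)) //; lia.
Qed.

Lemma int_eq_of_steps (G H : int -> int) : G 0 = H 0 ->
  (forall x : int, G (x + 1) - G x = H (x + 1) - H x) -> forall x, G x = H x.
Proof.
move=> GH0 dGH; elim/int_rect => [//|n IH|n IH].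
  by have := dGH n; rewrite IH -addn1 PoszD => /addIr.
have := dGH (- n.+1%:Z); rewrite (_ : - n.+1%:Z + 1 = - n%:Z) ?IH; last by lia.
by move=> /addrI /oppr_inj.
Qed.

Section walk.
Variables a s : int -> bool.

Lemma AS_empty (i : int) : AS a s i (i - 1) = 0.
Proof. by rewrite /AS !isum_empty subrr. Qed.

Lemma AS_recr (i j : int) : i - 1 <= j ->
  AS a s i (j + 1) = AS a s i j + ((a (j + 1))%:Z - (s (j + 1))%:Z).
Proof. by move=> ij; rewrite /AS !isum_recr //; ring. Qed.

Lemma AS_recl (i j : int) : i <= j ->
  AS a s i j = ((a i)%:Z - (s i)%:Z) + AS a s (i + 1) j.
Proof. by move=> ij; rewrite /AS !(@isum_recl _ i j ij); ring. Qed.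

Lemma AS_split (i j k : int) : i - 1 <= j -> j <= k ->
  AS a s i k = AS a s i j + AS a s (j + 1) k.
Proof. by move=> ij jk; rewrite /AS !(@isum_split _ i j k ij jk); ring. Qed.

Lemma AS_bounds (i j : int) : i - 1 <= j ->
  - (j - i + 1) <= AS a s i j <= j - i + 1.
Proof.
move=> ij; have -> : j = i - 1 + (absz (j - i + 1))%:Z by lia.
elim: (absz _) => [|n IH]; first by rewrite addr0 AS_empty; lia.
by rewrite (_ : i - 1 + n.+1%:Z = i - 1 + n%:Z + 1) ?AS_recr; lia.
Qed.

Lemma height_sub_AS (x j : int) : x <= j ->
  height s j - height s x - (height a j - height a x) = 2 * AS a s (x + 1) j.
Proof.
move=> xj; have -> : j = x + (absz (j - x))%:Z by lia.
elim: (absz _) => [|n IH].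
  by have := AS_empty (x + 1); rewrite addrK addr0 => ->; ring.
have := height_step s (x + n%:Z); have := height_step a (x + n%:Z).
by rewrite (_ : x + n.+1%:Z = x + n%:Z + 1) ?AS_recr; lia.
Qed.

End walk.

Lemma int_max_of_ubound (D : set int) (g : int -> int) (j0 M : int) : D j0 ->
  (forall j, D j -> g j <= M) ->
  exists m, (exists2 j, D j & g j = m) /\ (forall j, D j -> g j <= m).
Proof.
move=> Dj0 leM; pose P n := `[< exists2 j, D j & g j = g j0 + n%:Z >].
have P0 : exists n, P n by exists 0%N; apply/asboolP; exists j0; rewrite ?addr0.
have Pub n : P n -> (n <= absz (M - g j0))%N.
  by move=> /asboolP[j Dj gj]; have := leM j Dj; lia.
case: (ex_maxnP P0 Pub) => n /asboolP[j Dj gj] n_max.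
exists (g j); split=> [|k Dk]; first by exists j.
have [lt_k|ge_k] := ltP (g k) (g j0); first by lia.
have Pk : P (absz (g k - g j0)) by apply/asboolP; exists k => //; lia.
by have := n_max _ Pk; lia.
Qed.

Lemma ereal_sup_int_max (R : realType) (D : set int) (g : int -> int) (m : int) :
  (exists2 j, D j & g j = m) -> (forall j, D j -> g j <= m) ->
  ereal_sup [set ((g j)%:~R : R)%:E | j in D] = (m%:~R : R)%:E.
Proof.
move=> [j Dj gj] ub; apply/eqP; rewrite eq_le; apply/andP; split.
  by apply: ub_ereal_sup => _ [k Dk <-]; rewrite lee_fin ler_int ub.
by apply: ereal_sup_ubound; exists j; rewrite ?gj.
Qed.

Definition is_queue_length (a s : int -> bool) (i m : int) : Prop :=
  (exists2 j : int, i - 1 <= j & AS a s i j = m) /\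
  (forall j : int, i - 1 <= j -> AS a s i j <= m).

Definition departures (a s : int -> bool) (q : int -> int) (i : int) : bool :=
  s i && (a i || (1 <= q (i + 1))).

Section queue.
Context {a s : int -> bool} {q : int -> int}.
Hypothesis q_max : forall i : int, is_queue_length a s i (q i).

Lemma queue_ge0 (i : int) : 0 <= q i.
Proof. by rewrite -(AS_empty a s i); apply: (q_max i).2. Qed.

Lemma queue_lindley (i : int) : q i = Num.max 0 ((a i)%:Z - (s i)%:Z + q (i + 1)).
Proof.
have [[j0 ij0 <-] le_q0] := q_max i; have [[j1 ij1 <-] le_q1] := q_max (i + 1).
have ge0 : 0 <= AS a s i j0 by rewrite -(AS_empty a s i) le_q0.
have ge_next : (a i)%:Z - (s i)%:Z + AS a s (i + 1) j1 <= AS a s i j0.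
  by rewrite -AS_recl ?le_q0 //; lia.
have [j0E|j0i] := eqVneq j0 (i - 1).
  by rewrite j0E AS_empty in ge_next *; lia.
have le_next : AS a s i j0 <= (a i)%:Z - (s i)%:Z + AS a s (i + 1) j1.
  by rewrite (@AS_recl _ _ i) ?lerD2l ?le_q1 //; lia.
lia.
Qed.

Lemma queue_step (i : int) : q i - q (i + 1) = (a i)%:Z - (departures a s q i)%:Z.
Proof.
rewrite /departures; have := queue_lindley i; have := queue_ge0 (i + 1).
by case: (a i); case: (s i); case: (leP 1 (q (i + 1))) => /=; lia.
Qed.

Lemma height_departures (x : int) :
  height (departures a s q) x - height a x = 2 * (q 1 - q (x + 1)).
Proof.
move: x; apply: int_eq_of_steps; first by rewrite !height0 (add0r 1) !subrr mulr0.
move=> x; have := height_step a x; have := height_step (departures a s q) x.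
have := queue_step (x + 1); lia.
Qed.

Lemma ereal_sup_height_increments (R : realType) (x : int) :
  ereal_sup [set ((height s j - height s x - (height a j - height a x))%:~R : R)%:E
            | j in [set j : int | x <= j]] = ((2 * q (x + 1))%:~R : R)%:E.
Proof.
have [[j xj AS_j] le_q] := q_max (x + 1).
apply: ereal_sup_int_max => [|k /= xk].
  by exists j => /=; rewrite ?height_sub_AS ?AS_j //; lia.
by rewrite height_sub_AS // ler_pM2l // le_q //; lia.
Qed.

Lemma Qlen_queue (R : realType) (i : int) : Qlen R a s i = ((q i)%:~R : R)%:E.
Proof. by have [? ?] := q_max i; apply: ereal_sup_int_max. Qed.

Lemma dep_queue (R : realType) : dep R a s = departures a s q.
Proof.
apply/funext => i; rewrite /dep Qlen_queue lee_fin ler1z.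
by congr (_ && (_ || _)); apply/asboolP/idP.
Qed.

End queue.

Section drift.
Variables a s : int -> bool.
Hypothesis drift : exists J : nat, forall j : nat, (J <= j)%N -> AS a s 1 j%:Z < 0.

Lemma AS_bounded_above (i : int) :
  exists M : int, forall j : int, i - 1 <= j -> AS a s i j <= M.
Proof.
(* Up to N the increments are bounded; beyond N the walk started at 1 is negative. *)
have [J neg] := drift; pose N : int := maxn J (absz i).
exists (2 * N - i + 1) => j ij; have [jN|Nj] := leP j N.
  by have := AS_bounds a s i j ij; lia.
have iN : i - 1 <= N by lia.
have N0 : 1 - 1 <= N by lia.
have neg_j : AS a s 1 j < 0.
  by have := neg (absz j); rewrite gez0_abs; [apply; lia | lia].
have := AS_split a s i N j iN (ltW Nj); have := AS_split a s 1 N j N0 (ltW Nj).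
by have := AS_bounds a s i N iN; have := AS_bounds a s 1 N N0; lia.
Qed.

Lemma queue_length_exists (i : int) : exists m : int, is_queue_length a s i m.
Proof.
have [M le_M] := AS_bounded_above i.
exact: (@int_max_of_ubound [set j | i - 1 <= j] (AS a s i) (i - 1) M (lexx _)).
Qed.

Lemma height_dep_identity (R : realType) (x : int) :
  (((height (dep R a s) x)%:~R : R)%:E =
    ((height a x)%:~R : R)%:E
    + ereal_sup [set ((height s j - height a j)%:~R : R)%:E | j in [set j : int | (0 <= j)%R]]
    - ereal_sup [set ((height s j - height s x - (height a j - height a x))%:~R : R)%:E
                | j in [set j : int | (x <= j)%R]])%E.
Proof.
have [q q_max] := choice queue_length_exists.
have := ereal_sup_height_increments q_max R 0.
under eq_imagel do rewrite !height0 !subr0.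
rewrite (add0r 1) => ->.
rewrite (ereal_sup_height_increments q_max) (dep_queue q_max).
rewrite -EFinD -intrD -intrB; congr (_%:~R)%:E.
by have := height_departures q_max x; lia.
Qed.

End drift.

Section finite_valued_map.
Context {d} {T : measurableType d} {R : realType} (mu : {measure set T -> \bar R}).
Context {U : finType} {W : T -> U}.
Hypothesis mW : forall u, measurable [set w | W w = u].

Let preimage_fibers (A : pred U) :
  [set w | A (W w)] = \bigcup_(u in [set` A]) [set w | W w = u].
Proof. by apply/seteqP; split=> [w Aw|w [u Au wu]]; [exists (W w) | rewrite /= wu]. Qed.

Lemma measurable_finite_preimage (A : pred U) : measurable [set w | A (W w)].
Proof. by rewrite preimage_fibers; apply: fin_bigcup_measurable => // u _; exact: mW. Qed.

Lemma measure_finite_preimage (A : pred U) :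
  mu [set w | A (W w)] = (\sum_(u | A u) mu [set w | W w = u])%E.
Proof.
rewrite preimage_fibers measure_fin_bigcup //.
  by rewrite -(bigfs _ (index_enum_uniq U)) // => u _; rewrite mem_index_enum.
by move=> u u' _ _ [w [/= <- <-]].
Qed.

End finite_valued_map.

Section independent_bool_family.
Context {d} {T : measurableType d} {R : realType} (P : probability T R).

Lemma indep_bool_family_comp (I J : eqType) (X : I -> T -> bool) (f : J -> I) :
  injective f -> indep_bool_family P X -> indep_bool_family P (fun j => X (f j)).
Proof.
move=> f_inj indX K b uK; pose b' i := `[< exists2 k, f k = i & b k >].
have b'E k : b' (f k) = b k.
  by apply/asboolP/idP => [[k' /f_inj -> //]|bk]; exists k.
have := indX (map f K) b'; rewrite map_inj_uniq // big_map => /(_ uK).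
under eq_bigr do rewrite b'E; move=> <-; congr (P _).
apply/seteqP; split=> w /= Xw.
  by move=> _ /= /mapP[k Kk ->]; rewrite b'E; exact: Xw.
by move=> k Kk; rewrite -b'E; apply: Xw; rewrite /= map_f.
Qed.

Let set_eq_false (E : T -> bool) : [set w | E w = false] = ~` [set w | E w].
Proof. by apply/seteqP; split=> w /=; case: (E w). Qed.

Lemma measurable_bool_eq (E : T -> bool) (b : bool) :
  measurable [set w | E w] -> measurable [set w | E w = b].
Proof. by case: b => // mE; rewrite set_eq_false; exact: measurableC. Qed.

Lemma probability_bool_eq (E : T -> bool) (x : R) (b : bool) :
  measurable [set w | E w] -> P [set w | E w] = x%:E ->
  P [set w | E w = b] = (if b then x else 1 - x)%:E.
Proof. by case: b => // mE PE; rewrite set_eq_false probability_setC // PE. Qed.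

Section finite_family.
Context {F : finType} {Y : F -> T -> bool}.
Hypothesis mY : forall f, measurable [set w | Y f w].

Let pattern_fiberE (b : {ffun F -> bool}) :
  [set w | [ffun f => Y f w] = b] = \bigcap_(f in [set` enum F]) [set w | Y f w = b f].
Proof.
apply/seteqP; split=> [w /= <- f _|w /= Yw]; first by rewrite ffunE.
by apply/ffunP => f; rewrite ffunE Yw //= mem_enum.
Qed.

Lemma measurable_bool_pattern (b : {ffun F -> bool}) :
  measurable [set w | [ffun f => Y f w] = b].
Proof.
rewrite pattern_fiberE bigcap_seq.
by apply: bigsetI_measurable => f _; exact: measurable_bool_eq.
Qed.

Let score_ge0 (g : F -> bool -> int) (b : {ffun F -> bool}) := 0 <= \sum_f g f (b f).

Let sum_ge0E (g : F -> bool -> int) :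
  [set w | 0 <= \sum_f g f (Y f w)] = [set w | score_ge0 g [ffun f => Y f w]].
Proof.
by apply/funext => w /=; rewrite /score_ge0; under [in RHS]eq_bigr do rewrite ffunE.
Qed.

Lemma measurable_sum_ge0 (g : F -> bool -> int) :
  measurable [set w | 0 <= \sum_f g f (Y f w)].
Proof.
by rewrite sum_ge0E; exact: measurable_finite_preimage measurable_bool_pattern (score_ge0 g).
Qed.

Context {p : F -> R}.
Hypothesis PY : forall f, P [set w | Y f w] = (p f)%:E.
Hypothesis indY : indep_bool_family P Y.

Lemma probability_bool_pattern (b : {ffun F -> bool}) :
  P [set w | [ffun f => Y f w] = b] = (\prod_f (if b f then p f else 1 - p f))%:E.
Proof.
rewrite pattern_fiberE indY ?enum_uniq // big_enum /= -prodEFin.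
by apply: eq_bigr => f _; apply: probability_bool_eq.
Qed.

Theorem chernoff_bool_family (g : F -> bool -> int) (t : R) : 1 <= t ->
  (P [set w | (0 <= \sum_f g f (Y f w))%R] <=
   (\prod_f (p f * t ^ g f true + (1 - p f) * t ^ g f false))%:E)%E.
Proof.
move=> t1; have t0 : 0 < t by apply: lt_le_trans t1.
have p01 f : 0 <= p f <= 1.
  by rewrite -!lee_fin -PY measure_ge0 probability_le1.
pose m f (b : bool) := (if b then p f else 1 - p f) * t ^ g f b.
have m0 f b : 0 <= m f b.
  by apply: mulr_ge0; [case: b; have := p01 f; lra | exact: exprz_ge0 (ltW t0)].
(* Bound the indicator of [score >= 0] by [t ^ score], whose mean factorises over the bits. *)
rewrite sum_ge0E measure_finite_preimage; last exact: measurable_bool_pattern.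
rewrite (eq_bigr (fun b : {ffun F -> bool} =>
  (\prod_f (if b f then p f else 1 - p f))%:E)); last first.
  by move=> b _; exact: probability_bool_pattern.
rewrite sumEFin lee_fin.
have -> : \prod_f (p f * t ^ g f true + (1 - p f) * t ^ g f false) =
          \sum_(b : {ffun F -> bool}) \prod_f m f (b f).
  by rewrite -bigA_distr_bigA; apply: eq_bigr => f _; rewrite big_bool.
rewrite [leRHS](bigID (score_ge0 g)) /= -[leLHS]addr0 lerD //; last first.
  by apply: sumr_ge0 => b _; apply: prodr_ge0 => f _.
apply: ler_sum => b Ab; rewrite /m big_split /= ler_peMr //.
  by apply: prodr_ge0 => f _; case: (b f); have := p01 f; lra.
have expzD (x y : int) : t ^ (x + y) = t ^ x * t ^ y by rewrite expfzDr ?lt0r_neq0.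
rewrite -(big_morph (fun z : int => t ^ z) expzD (expr0z t)).
by move: Ab; rewrite /score_ge0; case: (\sum_f _) => // n _; exact: exprn_ege1.
Qed.

End finite_family.
End independent_bool_family.

Definition window_index (j : nat) (ke : 'I_j * bool) : int + int :=
  if ke.2 then inr (1 + ke.1%:Z) else inl (1 + ke.1%:Z).

Lemma window_index_inj (j : nat) : injective (window_index j).
Proof.
move=> [k e] [k' e']; rewrite /window_index /=.
by case: e; case: e' => // -[] kk'; congr (_, _); apply: ord_inj; lia.
Qed.

Lemma AS_window (a s : int -> bool) (j : nat) :
  AS a s 1 j%:Z =
  \sum_(ke : 'I_j * bool) (if ke.2 then - (s (1 + ke.1%:Z))%:Z else (a (1 + ke.1%:Z))%:Z).
Proof.
have -> : j%:Z = 1 + j%:Z - 1 by lia.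
rewrite /AS !isum_nat -sumrB.
rewrite -(pair_bigA _ (fun (k : 'I_j) (e : bool) =>
  if e then - (s (1 + k%:Z))%:Z else (a (1 + k%:Z))%:Z)).
by apply: eq_bigr => k _; rewrite big_bool addrC.
Qed.

Section arrival_service_walk.
Context {d} {T : measurableType d} {R : realType} {P : probability T R}.
Context {a s : int -> T -> bool} {p q : R}.
Hypothesis ma : forall i, measurable [set w | a i w].
Hypothesis ms : forall i, measurable [set w | s i w].
Hypothesis Pa : forall i, P [set w | a i w] = p%:E.
Hypothesis Ps : forall i, P [set w | s i w] = q%:E.
Hypothesis indep_as :
  indep_bool_family P (fun k : int + int => match k with inl i => a i | inr i => s i end).

Let Y (j : nat) (ke : 'I_j * bool) : T -> bool :=
  match window_index j ke with inl i => a i | inr i => s i end.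

Let g (j : nat) (ke : 'I_j * bool) (b : bool) : int := if ke.2 then - b%:Z else b%:Z.

Let mY j ke : measurable [set w | Y j ke w].
Proof. by case: ke => k []; [exact: ms | exact: ma]. Qed.

Let PY j ke : P [set w | Y j ke w] = (if ke.2 then q else p)%:E.
Proof. by case: ke => k []; [exact: Ps | exact: Pa]. Qed.

Let walk_nonnegE (j : nat) :
  [set w | 0 <= AS (fun i => a i w) (fun i => s i w) 1 j%:Z] =
  [set w | 0 <= \sum_ke g j ke (Y j ke w)].
Proof.
by apply/funext => w /=; rewrite AS_window; congr (0 <= _); apply: eq_bigr => -[k []].
Qed.

Lemma measurable_walk_nonneg (j : nat) :
  measurable [set w | 0 <= AS (fun i => a i w) (fun i => s i w) 1 j%:Z].
Proof. by rewrite walk_nonnegE; exact: measurable_sum_ge0. Qed.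

Lemma probability_walk_nonneg_le (j : nat) (t : R) : 1 <= t ->
  (P [set w | (0 <= AS (fun i => a i w) (fun i => s i w) 1 j%:Z)%R] <=
   (((p * t + (1 - p)) * (q / t + (1 - q))) ^+ j)%:E)%E.
Proof.
move=> t1; rewrite walk_nonnegE.
have indY : indep_bool_family P (Y j).
  exact: indep_bool_family_comp (window_index_inj j) indep_as.
apply: le_trans (chernoff_bool_family P (mY j) (PY j) indY (g j) t t1) _.
rewrite lee_fin (_ : \prod_ke _ = \prod_(k < j) ((q / t + (1 - q)) * (p * t + (1 - p)))).
  by rewrite prodr_const card_ord mulrC.
rewrite -(pair_bigA _ (fun k (e : bool) =>
  (if e then q else p) * t ^ g j (k, e) true + (1 - (if e then q else p)) * t ^ g j (k, e) false)).
by apply: eq_bigr => k _; rewrite big_bool /g /= oppr0 expr0z exprN1 expr1z !mulr1.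
Qed.

End arrival_service_walk.

Lemma chernoff_base_lt1 (R : realType) (p q : R) : 0 < p -> p < q -> q < 1 ->
  exists2 t : R, 1 <= t & 0 <= (p * t + (1 - p)) * (q / t + (1 - q)) < 1.
Proof.
move=> p0 pq q1; pose e := (q - p) / (p * (1 - q)).
have pq0 : 0 < p * (1 - q) by apply: mulr_gt0; lra.
have e0 : 0 < e by apply: divr_gt0; lra.
have qpe : q - p - e * (p * (1 - q)) = 0 by rewrite /e divfK ?subrr // gt_eqF.
(* [c t * t - t = p (1 - q) (t - 1) (t - 1 - e)]: take [t] halfway between the roots. *)
exists (1 + e / 2); first lra.
set t := 1 + e / 2; have t0 : 0 < t by rewrite /t; lra.
have ct : (p * t + (1 - p)) * (q / t + (1 - q)) * t =
          t - p * (1 - q) * (e / 2) ^+ 2 + (q - p - e * (p * (1 - q))) * (1 - t).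
  by rewrite /t; field; lra.
rewrite qpe mul0r addr0 in ct.
apply/andP; split.
  by apply: mulr_ge0; [nra | apply: addr_ge0; [apply: divr_ge0 | ]; lra].
by rewrite -(ltr_pM2r t0) ct mul1r; nra.
Qed.

Lemma nneseries_geometric_lt_pinfty {R : realType} {c : R} : 0 <= c < 1 ->
  (\sum_(n <oo) (c ^+ n)%:E < +oo)%E.
Proof.
move=> /andP[c0 c1]; have cabs : `|c| < 1 by rewrite ger0_norm.
have /EFin_lim := is_cvg_geometric_series (a := 1) cabs.
have -> : EFin \o series (geometric 1 c) = (fun n => \sum_(0 <= k < n) (c ^+ k)%:E)%E.
  apply/funext => n /=; rewrite sumEFin; congr (_%:E); apply: eq_bigr => k _.
  by rewrite /= mul1r.
by move=> ->; rewrite ltry.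
Qed.

Theorem lemma5p3 (d : measure_display) (T : measurableType d) (R : realType)
  (P : probability T R) (rho1 rho2 : R)
  (a s : int -> T -> bool) :
  0 < rho1 < 1 -> 0 < rho2 < 1 - rho1 ->
  (forall i, measurable [set w | a i w]) ->
  (forall i, measurable [set w | s i w]) ->
  (forall i, P [set w | a i w] = rho1%:E) ->
  (forall i, P [set w | s i w] = (rho1 + rho2)%:E) ->
  indep_bool_family P
    (fun k : int + int => match k with inl i => a i | inr i => s i end) ->
  {ae P, forall w, forall x : int,
    let aw := fun i => a i w in
    let sw := fun i => s i w in
    let h1 := height (dep R aw sw) in
    let h12 := height sw in
    let hh1 := height aw in
    (((h1 x)%:~R : R)%:E =
       ((hh1 x)%:~R : R)%:E
       + ereal_sup [set (((h12 j - hh1 j)%:~R : R)%:E) | j in [set j : int | (0 <= j)%R]]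
       - ereal_sup [set (((h12 j - h12 x - (hh1 j - hh1 x))%:~R : R)%:E)
                     | j in [set j : int | (x <= j)%R]])%E}.
Proof.
move=> /andP[p0 _] /andP[r0 r1] ma ms Pa Ps indep_as.
have [t t1 c01] :=
  @chernoff_base_lt1 R rho1 (rho1 + rho2) p0 ltac:(lra) ltac:(lra).
pose W j := [set w | (0 <= AS (fun i => a i w) (fun i => s i w) 1 j%:Z)%R].
have mW j : measurable (W j) := measurable_walk_nonneg ma ms j.
have PW : (\sum_(j <oo) P (W j) < +oo)%E.
  apply: le_lt_trans (nneseries_geometric_lt_pinfty c01).
  apply: lee_nneseries => [j _ _|j _]; first exact: measure_ge0.
  exact: probability_walk_nonneg_le ma ms Pa Ps indep_as j t t1.
exists (lim_sup_set W); split.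
- by apply: bigcap_measurable => // n _; exact: bigcup_measurable.
- exact: lim_sup_set_cvg0 _ _ mW PW.
move=> w /= identity_fails; apply: contrapT => finitely_often; apply: identity_fails.
move=> x; apply: height_dep_identity.
have [n notW] : exists n, ~ (\bigcup_(j >= n) W j) w.
  by apply/existsNP => all_often; apply: finitely_often => n _; exact: all_often.
exists n => j nj; rewrite ltNge; apply/negP => Wj; apply: notW; exists j => //.
Qed.
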